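(* Let $\varphi\colon\mathcal{A}\to\mathcal{A}^*$ be a substitution of constant length $k$. Let $x\in\mathcal{A}^{\mathbf{Z}}$, let $(x^i)_{i\geq0}$ be a sequence of elements of $\mathcal{A}^{\mathbf{Z}}$ and $(c_i)_{i\geq0}$ a sequence of elements of $[0,k-1]$ such that $x^0=x$ and $x^i=T^{c_i}(\varphi(x^{i+1}))$ for all $i\geq0$. Then $$\mathrm{K}_k(x)=\Big\{\Psi_{\mathbf{i}}(x^m): m\geq0,\ \mathbf{i}\in[0,k-1]^m,\ \sum_{l=0}^{m-1}i_{m-l-1}k^l\geq\sum_{l=0}^{m-1}c_lk^l\Big\}\cup\Big\{\Psi_{\mathbf{i}}(T(x^m)): m\geq0,\ \mathbf{i}\in[0,k-1]^m,\ \sum_{l=0}^{m-1}i_{m-l-1}k^l<\sum_{l=0}^{m-1}c_lk^l\Big\}.$$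
   Context: $\varphi$ has constant length $k\geq2$ ($|\varphi(a)|=k$ for all $a$) and acts on $\mathcal{A}^{\mathbf{Z}}$ by concatenation with $\varphi(x_0)$ starting at position $0$; $T$ is the shift $(Tx)_n=x_{n+1}$. For $i\in[0,k-1]$, $\Psi_i\colon\mathcal{A}\to\mathcal{A}$, $a\mapsto\varphi(a)_i$ (the $i$-th letter, indexing from $0$), extended letterwise to $\mathcal{A}^{\mathbf{Z}}$. For $\mathbf{i}=i_0\cdots i_{m-1}\in[0,k-1]^m$, $\Psi_{\mathbf{i}}=\Psi_{i_{m-1}}\circ\cdots\circ\Psi_{i_0}$, and $\Psi_{\mathbf{i}}$ is the identity when $m=0$. The $k$-kernel of a two-sided sequence $x=(x_n)_{n\in\mathbf{Z}}$ is $\mathrm{K}_k(x)=\{(x_{k^mn+i})_{n\in\mathbf{Z}}: m\geq0,\ 0\leq i\leq k^m-1\}$. *)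

From mathcomp Require Import all_boot all_order all_algebra.
Set Implicit Arguments. Unset Strict Implicit. Unset Printing Implicit Defensive.
Import Order.TTheory GRing.Theory Num.Theory.

Section Defs.
Variable A : Type.

Definition Psi (phi : A -> seq A) (i : nat) (a : A) : A := nth a (phi a) i.

(* Psi_{i_0 ... i_{m-1}} = Psi_{i_{m-1}} o ... o Psi_{i_0}; identity for the empty word *)
Definition Psi_word (phi : A -> seq A) (w : seq nat) (a : A) : A :=
  foldl (fun b i => Psi phi i b) a w.

Definition Psi_seq (phi : A -> seq A) (w : seq nat) (x : int -> A) : int -> A :=
  fun n => Psi_word phi w (x n).

Definition shift (x : int -> A) : int -> A := fun n => x (n + 1)%R.
Definition shiftn (c : nat) (x : int -> A) : int -> A := fun n => x (n + c%:Z)%R.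

(* action of a constant-length-k substitution on A^Z:
   phi(x)_{kn+j} = phi(x_n)_j for 0 <= j < k  (concatenation starting at 0) *)
Definition subst_seq (phi : A -> seq A) (k : nat) (x : int -> A) : int -> A :=
  fun n => Psi phi (absz (n %% k%:Z)%Z) (x (n %/ k%:Z)%Z).

Definition kernel (k : nat) (x : int -> A) : (int -> A) -> Prop :=
  fun y => exists m i : nat, i <= k ^ m - 1 /\
                             y = (fun n : int => x ((k ^ m)%:Z * n + i%:Z)%R).

End Defs.

Definition word_val (k : nat) (w : seq nat) : nat :=
  \sum_(l < size w) nth 0 w (size w - l - 1) * k ^ l.

Definition c_val (k : nat) (c : nat -> nat) (m : nat) : nat :=
  \sum_(l < m) c l * k ^ l.

From mathcomp Require Import all_boot all_order all_algebra.
From mathcomp Require Import zify ring.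
From Stdlib Require Import FunctionalExtensionality.
Set Implicit Arguments. Unset Strict Implicit.
Import GRing.Theory.

(* Unfolding the m desubstitutions x^l = T^(c_l) phi(x^(l+1)) one digit at a
   time gives x_(k^m n + v - C_m) = Psi_w(x^m)_n, where v is the value of the
   digit word w read in base k and C_m = sum_(l < m) c_l k^l.  As 0 <= C_m < k^m,
   every i < k^m is written uniquely as i + C_m = v + t k^m with v < k^m and
   t in {0, 1}, which identifies the kernel element (x_(k^m n + i))_n with
   Psi_w(T^t x^m); the sign of v - C_m decides t. *)

Section Digits.

Variable k : nat.
Hypothesis k_gt0 : 0 < k.

Lemma word_val_cons d w : word_val k (d :: w) = d * k ^ size w + word_val k w.
Proof.
rewrite /word_val /= big_ord_recr /= subSnn subnn addnC; congr (_ + _).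
by apply: eq_bigr => i _; rewrite subSn ?subn1 -?(subnSK (ltn_ord i)) // ltnW.
Qed.

Lemma c_valS c m : c_val k c m.+1 = c_val k c m + c m * k ^ m.
Proof. by rewrite /c_val big_ord_recr. Qed.

Lemma word_val_ltn w : all (fun i => i <= k - 1) w -> word_val k w < k ^ size w.
Proof.
elim: w => [|d w IHw] /=; first by rewrite /word_val big_ord0.
case/andP=> d_le w_digits; rewrite word_val_cons expnS.
have := IHw w_digits; have : d * k ^ size w <= (k - 1) * k ^ size w.
  by rewrite leq_mul2r d_le orbT.
nia.
Qed.

Lemma c_val_ltn c m : (forall l, c l <= k - 1) -> c_val k c m < k ^ m.
Proof.
move=> c_le; elim: m => [|m IHm]; first by rewrite /c_val big_ord0.
rewrite c_valS expnS; have : c m * k ^ m <= (k - 1) * k ^ m.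
  by rewrite leq_mul2r c_le orbT.
move: IHm; nia.
Qed.

Lemma word_val_onto m v : v < k ^ m ->
  exists w, [/\ size w = m, all (fun i => i <= k - 1) w & word_val k w = v].
Proof.
elim: m v => [|m IHm] v v_lt.
  by move: v_lt; rewrite expn0 ltnS leqn0 => /eqP->; exists [::]; rewrite /word_val big_ord0.
have km_gt0 : 0 < k ^ m by rewrite expn_gt0 k_gt0.
have [w [size_w w_digits val_w]] := IHm (v %% k ^ m) (ltn_pmod _ km_gt0).
exists (v %/ k ^ m :: w); split=> /=; first by rewrite size_w.
  rewrite w_digits andbT; have : v %/ k ^ m < k by rewrite ltn_divLR // -expnS.
  lia.
by rewrite word_val_cons val_w size_w -divn_eq.
Qed.

End Digits.

Lemma subst_seq_digit (A : Type) (phi : A -> seq A) k (y : int -> A) d (n : int) :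
  d < k -> subst_seq phi k y (k%:Z * n + d%:Z)%R = Psi phi d (y n).
Proof.
move=> d_lt; rewrite /subst_seq mulrC divzMDl; last by case: k d_lt.
by rewrite modzMDl divz_small ?modz_small ?addr0 //; apply/andP; split; lia.
Qed.

Lemma shiftn0 (A : Type) (y : int -> A) : shiftn 0 y = y.
Proof. by apply: functional_extensionality => n; rewrite /shiftn addr0. Qed.

Section Desubstitution.

Variables (A : Type) (phi : A -> seq A) (k : nat).
Variables (xs : nat -> int -> A) (c : nat -> nat).
Hypothesis k_gt0 : 0 < k.
Hypothesis xs_desubst : forall i, xs i = shiftn (c i) (subst_seq phi k (xs i.+1)).

Lemma xs_digit m d (n : int) :
  d < k -> xs m (k%:Z * n + d%:Z - (c m)%:Z)%R = Psi phi d (xs m.+1 n).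
Proof. by move=> d_lt; rewrite xs_desubst /shiftn subrK subst_seq_digit. Qed.

Lemma xs0_Psi_word w (n : int) : all (fun i => i <= k - 1) w ->
  xs 0 ((k ^ size w)%:Z * n + (word_val k w)%:Z - (c_val k c (size w))%:Z)%R
  = Psi_word phi w (xs (size w) n).
Proof.
elim: w n => [|d w IHw] n /=.
  by move=> _; rewrite /word_val /c_val !big_ord0 expn0 mul1r subr0 addr0.
case/andP=> d_le w_digits; rewrite word_val_cons c_valS -xs_digit; last by lia.
rewrite -IHw //; congr (xs 0 _); rewrite expnS !PoszD !PoszM; ring.
Qed.

Lemma kernel_seq_Psi_seq m w i t :
  size w = m -> all (fun i => i <= k - 1) w ->
  i + c_val k c m = word_val k w + t * k ^ m ->
  (fun n : int => xs 0 ((k ^ m)%:Z * n + i%:Z)%R) = Psi_seq phi w (shiftn t (xs m)).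
Proof.
move=> size_w w_digits i_eq; apply: functional_extensionality => n.
by rewrite /Psi_seq /shiftn -size_w -xs0_Psi_word // size_w; congr (xs 0 _); lia.
Qed.

End Desubstitution.

Theorem lemma2p7 (A : Type) (phi : A -> seq A) (k : nat)
  (hk : 2 <= k) (hphi : forall a, size (phi a) = k)
  (x : int -> A) (xs : nat -> int -> A) (c : nat -> nat)
  (hc : forall i, c i <= k - 1)
  (hx0 : xs 0 = x)
  (hxs : forall i, xs i = shiftn (c i) (subst_seq phi k (xs i.+1))) :
  forall y : int -> A,
    kernel k x y <->
    ((exists (m : nat) (w : seq nat),
        [/\ size w = m, all (fun i => i <= k - 1) w,
            word_val k w >= c_val k c m & y = Psi_seq phi w (xs m)])
     \/
     (exists (m : nat) (w : seq nat),
        [/\ size w = m, all (fun i => i <= k - 1) w,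
            word_val k w < c_val k c m & y = Psi_seq phi w (shift (xs m))])).
Proof.
have k_gt0 : 0 < k by lia.
rewrite -hx0 => y; split.
- case=> m [i [i_le ->]].
  have C_lt := c_val_ltn k_gt0 m hc.
  have [no_carry | carry] := ltnP (i + c_val k c m) (k ^ m).
  + have [w [size_w w_digits val_w]] := word_val_onto k_gt0 no_carry.
    left; exists m, w; split=> //; first by lia.
    by rewrite -(shiftn0 (xs m)); apply: (kernel_seq_Psi_seq k_gt0 hxs) => //; lia.
  + have carry_lt : i + c_val k c m - k ^ m < k ^ m by lia.
    have [w [size_w w_digits val_w]] := word_val_onto k_gt0 carry_lt.
    right; exists m, w; split=> //; first by lia.
    by apply: (kernel_seq_Psi_seq k_gt0 hxs (t := 1)) => //; lia.
- case=> [[m [w [size_w w_digits val_w ->]]] | [m [w [size_w w_digits val_w ->]]]];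
    have := word_val_ltn k_gt0 w_digits; rewrite size_w => val_lt;
    have C_lt := c_val_ltn k_gt0 m hc.
  + exists m, (word_val k w - c_val k c m); split; first by lia.
    rewrite -(shiftn0 (xs m)); apply: esym.
    by apply: (kernel_seq_Psi_seq k_gt0 hxs) => //; lia.
  + exists m, (word_val k w + k ^ m - c_val k c m); split; first by lia.
    apply: esym.
    by apply: (kernel_seq_Psi_seq k_gt0 hxs (t := 1)) => //; lia.
Qed.
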